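(* Suppose $\mathrm{edim}(R) = n \ge 2$ and let $w_1 < w_2 < \cdots < w_N$ be the minimal generators of the numerical semigroup $V(R)$. Then $a_1 = w_1$, $a_2 = w_2$, and $$\{a_1, \ldots, a_n\} \subseteq \{w_1, \ldots, w_N\}.$$ If $R$ is a numerical semigroup ring, i.e. $R = k[[t^{w_1}, \ldots, t^{w_N}]]$, then $\{a_1, \ldots, a_n\} = \{w_1, \ldots, w_N\}$.
   Context: Let $k$ be a field and let $(R,\mathfrak m)$ be a complete local noetherian domain of dimension $1$ containing $k$ with $R/\mathfrak m = k$, with normalization $\overline R$ having residue field $k$, so $\overline R = k[[t]]$ and $R \subseteq k[[t]]$ is finite birational. Let $v$ be the $t$-adic valuation. For $A \subseteq k((t))$ let $v(A) = \{v(f): f\in A\setminus\{0\}\}$; $V(R) = v(R)$ is the value semigroup of $R$ (a numerical semigroup). The Herzog–Kunz sequence of $R$ is $v(\mathfrak m)\setminus v(\mathfrak m^2)$ listed increasingly as $a_1 < \cdots < a_n$, where $n = \mathrm{edim}(R) = \dim_k\mathfrak m/\mathfrak m^2$. *)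

From HB Require Import structures.
From mathcomp Require Import all_boot all_order all_algebra.
Set Implicit Arguments. Unset Strict Implicit. Unset Printing Implicit Defensive.
Import GRing.Theory.
Local Open Scope ring_scope.

(* Formal power series over K, i.e. elements of k[[t]], as coefficient
   functions: f i is the coefficient of t^i. *)
Definition pser (K : fieldType) := nat -> K.

Definition pcst (K : fieldType) (c : K) : pser K := fun i => if i == 0%N then c else 0.
Definition padd (K : fieldType) (f g : pser K) : pser K := fun i => f i + g i.
Definition pmul (K : fieldType) (f g : pser K) : pser K :=
  fun n => \sum_(i < n.+1) f i * g (n - i)%N.

Definition has_val (K : fieldType) (f : pser K) (x : nat) : Prop :=
  f x != 0 /\ forall j, (j < x)%N -> f j = 0.

Definition vals (K : fieldType) (A : pser K -> Prop) (x : nat) : Prop :=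
  exists f, A f /\ has_val f x.

(* R subset of k[[t]] is a k-subalgebra containing t^c k[[t]] for some c,
   i.e. a complete local one-dimensional domain containing k, finite and
   birational over k[[t]] (nonzero conductor). *)
Definition is_local_ring (K : fieldType) (R : pser K -> Prop) : Prop :=
  [/\ forall c : K, R (pcst c),
      forall f g, R f -> R g -> R (padd f g),
      forall f g, R f -> R g -> R (pmul f g)
    & exists c : nat, forall f : pser K, (forall i, (i < c)%N -> f i = 0) -> R f].

Definition mideal (K : fieldType) (R : pser K -> Prop) (f : pser K) : Prop :=
  R f /\ f 0%N = 0.

Definition msq (K : fieldType) (R : pser K -> Prop) (f : pser K) : Prop :=
  exists (m : nat) (g h : nat -> pser K),
    (forall i, (i < m)%N -> mideal R (g i) /\ mideal R (h i)) /\
    forall j, f j = \sum_(i < m) pmul (g i) (h i) j.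

(* edim(R) = dim_k m/m^2 = n : there are b_1..b_n in m whose classes form a
   k-basis of m/m^2. *)
Definition edim_is (K : fieldType) (R : pser K -> Prop) (n : nat) : Prop :=
  exists b : 'I_n -> pser K,
    [/\ forall i, mideal R (b i),
        forall g, mideal R g ->
          exists c : 'I_n -> K, msq R (fun j => g j - \sum_(i < n) c i * b i j)
      & forall c : 'I_n -> K, msq R (fun j => \sum_(i < n) c i * b i j) ->
          forall i, c i = 0].

Definition valsg (K : fieldType) (R : pser K -> Prop) : nat -> Prop := vals R.

Definition HKset (K : fieldType) (R : pser K -> Prop) (x : nat) : Prop :=
  vals (mideal R) x /\ ~ vals (msq R) x.

Definition min_gen (S : nat -> Prop) (x : nat) : Prop :=
  [/\ S x, (0 < x)%N &
      ~ exists y z, [/\ S y, S z, (0 < y)%N, (0 < z)%N & x = (y + z)%N]].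

(* R is the numerical semigroup ring k[[t^{w_1},...,t^{w_N}]], i.e. R consists
   of exactly the power series supported on V(R). *)
Definition is_semigroup_ring (K : fieldType) (R : pser K -> Prop) : Prop :=
  forall f : pser K, R f <-> (forall i, f i != 0 -> valsg R i).

From mathcomp Require Import all_boot all_order all_algebra.
From mathcomp Require Import zify.
From Stdlib Require Import Classical.

(* Values add under multiplication, so a value of m outside v(m^2) cannot be a
   sum of two positive values: it is a minimal generator of V(R). When R is the
   semigroup ring, m^2 consists of series supported on sums of two positive
   values, which gives the converse.
   Let s < d be the two smallest minimal generators. Elements of m^2 have order
   at least 2s, so s lies in v(m) \ v(m^2). The values of R below d are
   multiples of s, so if f in R has value s, subtracting leading terms shows
   that every element of R agrees modulo t^d with a polynomial in f. Hence an
   element of m^2 agrees modulo t^(d+1) with T(f) for a polynomial T of order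
   mu >= 2, whose value is s mu; value d would give d = s + s (mu - 1),
   contradicting minimality. Both sequences being increasing, they start with
   s and d. *)

Set Implicit Arguments.
Unset Strict Implicit.
Unset Printing Implicit Defensive.

Section PowerSeries.
Import GRing.Theory.
Local Open Scope ring_scope.
Variable K : fieldType.
Implicit Types (f g h : pser K) (P Q : {poly K}).

Lemma pmul_pcstl (c : K) h j : pmul (pcst c) h j = c * h j.
Proof.
rewrite /pmul big_ord_recl /= subn0 /pcst eqxx big1 ?addr0 // => i _.
by rewrite mul0r.
Qed.

Lemma pmul_eq0_lt f g x y :
  (forall j, (j < x)%N -> f j = 0) -> (forall j, (j < y)%N -> g j = 0) ->
  forall j, (j < x + y)%N -> pmul f g j = 0.
Proof.
move=> f0 g0 j lt_j; rewrite /pmul big1 // => i _.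
have [lt_ix | le_xi] := ltnP i x; first by rewrite f0 ?mul0r.
by rewrite g0 ?mulr0 //; have := ltn_ord i; lia.
Qed.

Lemma has_val_pmul f g x y :
  has_val f x -> has_val g y -> has_val (pmul f g) (x + y).
Proof.
move=> [fx f0] [gy g0]; split; last exact: pmul_eq0_lt.
have lt_x : (x < (x + y).+1)%N by lia.
rewrite /pmul (bigD1 (Ordinal lt_x)) //= big1 ?addr0; first by rewrite addKn mulf_neq0.
move=> i /eqP ne_ix; have {}ne_ix : nat_of_ord i <> x by move=> E; apply/ne_ix/val_inj.
have [lt_ix | le_xi] := ltnP i x; first by rewrite f0 ?mul0r.
by rewrite g0 ?mulr0 //; have := ltn_ord i; lia.
Qed.

Definition pexp f k := iter k (pmul f) (pcst 1).

Definition agree_below M f P := forall j, (j < M)%N -> f j = P`_j.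

Lemma agree_below_pcst M (c : K) : agree_below M (pcst c) c%:P.
Proof. by move=> j _; rewrite coefC. Qed.

Lemma agree_below_padd M f g P Q :
  agree_below M f P -> agree_below M g Q -> agree_below M (padd f g) (P + Q).
Proof. by move=> fP gQ j lt_j; rewrite /padd coefD fP ?gQ. Qed.

Lemma agree_below_pmul M f g P Q :
  agree_below M f P -> agree_below M g Q -> agree_below M (pmul f g) (P * Q).
Proof.
move=> fP gQ j lt_j; rewrite /pmul coefM; apply: eq_bigr => i _.
by have lt_i := ltn_ord i; rewrite fP ?gQ //; lia.
Qed.

Lemma agree_below_pexp M f P k : agree_below M f P -> agree_below M (pexp f k) (P ^+ k).
Proof.
move=> fP; elim: k => [|k IHk] /=; first exact: agree_below_pcst.
by rewrite exprS; apply: agree_below_pmul.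
Qed.

(* The factors vanish at [0], so the error terms have order at least [1 + d]. *)
Lemma agree_below_pmulS d f g P Q :
  f 0%N = 0 -> g 0%N = 0 -> P`_0 = 0 -> Q`_0 = 0 ->
  agree_below d f P -> agree_below d g Q -> agree_below d.+1 (pmul f g) (P * Q).
Proof.
move=> f0 g0 P0 Q0 fP gQ j lt_j; rewrite /pmul coefM; apply: eq_bigr => i _.
have lt_i := ltn_ord i.
have [le_di | lt_id] := leqP d i.
  have -> : (j - i = 0)%N by lia.
  by rewrite g0 Q0 !mulr0.
have [le_dji | lt_jid] := leqP d (j - i).
  have -> : nat_of_ord i = 0%N by lia.
  by rewrite f0 P0 !mul0r.
by rewrite fP ?gQ.
Qed.

End PowerSeries.

Section ValueSemigroup.
Import GRing.Theory.
Local Open Scope ring_scope.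
Variables (K : fieldType) (R : pser K -> Prop).

Lemma vals_mideal x : valsg R x -> (0 < x)%N -> vals (mideal R) x.
Proof. by move=> [g [Rg [gx g0]]] x_gt0; exists g; split; split => //; apply: g0. Qed.

Lemma vals_msq_add y z : valsg R y -> valsg R z -> (0 < y)%N -> (0 < z)%N ->
  vals (msq R) (y + z).
Proof.
move=> Vy Vz y_gt0 z_gt0.
have [g [[Rg g0] gy]] := vals_mideal Vy y_gt0.
have [h [[Rh h0] hz]] := vals_mideal Vz z_gt0.
exists (pmul g h); split; last exact: has_val_pmul.
exists 1%N, (fun=> g), (fun=> h); split=> [i _ | j]; first by split.
by rewrite big_ord1.
Qed.

Lemma HKset_min_gen x : HKset R x -> min_gen (valsg R) x.
Proof.
move=> [[g [[Rg g0] [gx gl]]] not_msq]; split.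
- by exists g.
- by case: x gx {gl not_msq} => //; rewrite g0 eqxx.
- move=> [y [z [Vy Vz y_gt0 z_gt0 x_eq]]]; apply: not_msq.
  by rewrite x_eq; apply: vals_msq_add.
Qed.

Lemma min_gen_HKset x : is_semigroup_ring R -> min_gen (valsg R) x -> HKset R x.
Proof.
move=> supp_R [Vx x_gt0 indec]; split; first exact: vals_mideal.
move=> [u [[m [g [h [gh_m u_eq]]]] [ux _]]]; move: ux.
rewrite u_eq big1 ?eqxx // => i _.
have [[Rg g0] [Rh h0]] := gh_m i (ltn_ord i).
rewrite /pmul big1 // => j _.
have [->|gj] := eqVneq (g i j) 0; first by rewrite mul0r.
have [->|hj] := eqVneq (h i (x - j)%N) 0; first by rewrite mulr0.
have j_gt0 : (0 < j)%N by case: (posnP j) gj => // ->; rewrite g0 eqxx.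
have lt_jx : (j < x)%N.
  have [// | le_xj] := ltnP j x; have := ltn_ord j => lt_j.
  have x_j : (x - j = 0)%N by lia.
  by move: hj; rewrite x_j h0 eqxx.
exfalso; apply: indec; exists j, (x - j)%N; split.
- exact: (proj1 (supp_R _) Rg).
- exact: (proj1 (supp_R _) Rh).
- exact: j_gt0.
- by rewrite subn_gt0.
- lia.
Qed.

Section LeastPositiveValue.
Variable s : nat.
Hypothesis s_min : forall x, valsg R x -> (0 < x)%N -> (s <= x)%N.

Lemma mideal_eq0_lt g j : mideal R g -> (j < s)%N -> g j = 0.
Proof.
move=> [Rg g0]; elim/ltn_ind: j => j IHj lt_js.
have [// | gj] := eqVneq (g j) 0; exfalso.
have Vj : valsg R j by exists g; split => //; split => // k lt_kj; apply: IHj => //; lia.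
case: j {IHj} lt_js gj Vj => [|j] lt_js gj Vj; first by move: gj; rewrite g0 eqxx.
by have := s_min Vj (ltn0Sn j); lia.
Qed.

Lemma msq_eq0_lt u j : msq R u -> (j < s + s)%N -> u j = 0.
Proof.
move=> [m [g [h [gh_m ->]]]] lt_j; rewrite big1 // => i _.
have [mg mh] := gh_m i (ltn_ord i).
by apply: (pmul_eq0_lt _ _ lt_j) => k; [exact: mideal_eq0_lt | exact: mideal_eq0_lt].
Qed.

Lemma HKset_least : valsg R s -> (0 < s)%N -> HKset R s.
Proof.
move=> Vs s_gt0; split; first exact: vals_mideal.
by move=> [u [msq_u [us _]]]; move: us; rewrite (msq_eq0_lt msq_u) ?eqxx //; lia.
Qed.

End LeastPositiveValue.

Hypothesis HR : is_local_ring R.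

Lemma R_pexp f k : R f -> R (pexp f k).
Proof.
case: HR => R1 _ RM _ Rf; elim: k => [|k IHk] /=; first exact: R1.
exact: RM.
Qed.

Lemma valsgD x y : valsg R x -> valsg R y -> valsg R (x + y).
Proof.
case: HR => _ _ RM _ [f [Rf fx]] [g [Rg gy]].
by exists (pmul f g); split; [exact: RM | exact: has_val_pmul].
Qed.

Lemma valsgMn x k : valsg R x -> valsg R (x * k).
Proof.
move=> Vx; elim: k => [|k IHk]; first last.
  by rewrite mulnS; apply: valsgD.
case: HR => R1 _ _ _; rewrite muln0.
by exists (pcst 1); split => //; split => //; rewrite /pcst oner_neq0.
Qed.

Lemma exists_valsg_gt0 : exists2 x, valsg R x & (0 < x)%N.
Proof.
case: HR => _ _ _ [c Rc]; exists c.+1 => //.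
exists (fun i => if i == c.+1 then 1 else 0); split.
  by apply: Rc => i lt_ic; case: eqP => // E; lia.
split=> [|j lt_j]; first by rewrite eqxx oner_neq0.
by case: eqP => // E; lia.
Qed.
End ValueSemigroup.

Section NumericalSemigroup.
Variable S : nat -> Prop.

Lemma not_min_gen_decomp x : S x -> (0 < x)%N -> ~ min_gen S x ->
  exists y z, [/\ S y, S z, (0 < y)%N, (0 < z)%N & x = (y + z)%N].
Proof. by move=> Sx x_gt0 not_gen; apply: NNPP => indec; apply: not_gen. Qed.

Lemma min_gen_le x : S x -> (0 < x)%N -> exists2 y, min_gen S y & (y <= x)%N.
Proof.
elim/ltn_ind: x => x IHx Sx x_gt0.
have [gen_x | not_gen] := classic (min_gen S x); first by exists x.
have [y [z [Sy _ y_gt0 z_gt0 x_eq]]] := not_min_gen_decomp Sx x_gt0 not_gen.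
have [t gen_t le_ty] := IHx y ltac:(lia) Sy y_gt0.
by exists t => //; lia.
Qed.

Lemma dvdn_below_min_gen s d :
  (forall x, min_gen S x -> (x < d)%N -> x = s) ->
  forall x, S x -> (x < d)%N -> (s %| x)%N.
Proof.
move=> gen_lt_d; elim/ltn_ind => x IHx Sx lt_xd.
have [-> | x_gt0] := posnP x; first exact: dvdn0.
have [gen_x | not_gen] := classic (min_gen S x); first by rewrite (gen_lt_d x).
have [y [z [Sy Sz y_gt0 z_gt0 x_eq]]] := not_min_gen_decomp Sx x_gt0 not_gen.
by rewrite x_eq dvdn_add // IHx //; lia.
Qed.

End NumericalSemigroup.

Section SecondGenerator.
Import GRing.Theory.
Local Open Scope ring_scope.
Variables (K : fieldType) (R : pser K -> Prop).
Hypothesis HR : is_local_ring R.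
Variables (f : pser K) (s d : nat).
Hypotheses (Rf : R f) (f_val : has_val f s) (s_gt0 : (0 < s)%N) (lt_sd : (s < d)%N).
Hypothesis dvd_below : forall x, valsg R x -> (x < d)%N -> (s %| x)%N.

(* [F = t^s G] is [f] truncated modulo [t^(d+1)], and [G`_0 = f s != 0]. *)
Let G : {poly K} := \poly_(i < d.+1) f (i + s)%N.
Let F : {poly K} := 'X^s * G.

Lemma agree_below_F : agree_below d.+1 f F.
Proof.
move=> j lt_j; rewrite coefXnM; have [lt_js | le_sj] := ltnP j s.
  by case: f_val => _ ->.
by rewrite coef_poly subnK // ifT //; lia.
Qed.

Lemma expF k : F ^+ k = 'X^(s * k) * G ^+ k.
Proof. by rewrite exprMn -exprM. Qed.

Lemma coef0_Gn k : (G ^+ k)`_0 = f s ^+ k.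
Proof. by rewrite -horner_coef0 horner_exp horner_coef0 coef_poly add0n. Qed.

Lemma coef0_comp_F P : (P \Po F)`_0 = P`_0.
Proof.
have F0 : F.[0] = 0 by rewrite horner_coef0 coefXnM s_gt0.
by rewrite -!horner_coef0 horner_comp F0.
Qed.

(* Cancel the lowest coefficient of [g - h] one index at a time: that index is
   a value of [R] below [d], hence some [s * k], and [f ^ k] cancels it. *)
Lemma R_agree_poly N g : (N <= d)%N -> R g -> exists P h,
  [/\ R h, agree_below d.+1 h (P \Po F) & forall j, (j < N)%N -> g j = h j].
Proof.
case: HR => R1 RD RM _; elim: N => [|N IHN] le_Nd Rg.
  exists 0, (pcst 0); split => //.
  by rewrite comp_poly0; apply: agree_below_pcst.
have [P [h [Rh hP gh]]] := IHN (ltnW le_Nd) Rg.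
have [eq_N | ne_N] := eqVneq (g N) (h N).
  by exists P, h; split => // j; rewrite ltnS leq_eqVlt => /orP [/eqP -> | /gh].
pose r := padd g (pmul (pcst (-1)) h).
have r_eq j : r j = g j - h j by rewrite /r /padd pmul_pcstl mulN1r.
have /dvdnP [k N_eq] : (s %| N)%N.
  apply: dvd_below; last by lia.
  exists r; split; first by apply: RD => //; apply: RM.
  split=> [|j lt_jN]; first by rewrite r_eq subr_eq0.
  by rewrite r_eq gh ?subrr.
pose c := (g N - h N) / f s ^+ k.
exists (P + c%:P * 'X^k), (padd h (pmul (pcst c) (pexp f k))); split.
- by apply: RD => //; apply: RM => //; apply: R_pexp.
- rewrite comp_polyD comp_polyM comp_polyC comp_Xn_poly.
  apply: agree_below_padd => //; apply: agree_below_pmul; first exact: agree_below_pcst.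
  exact/agree_below_pexp/agree_below_F.
move=> j lt_jN; rewrite /padd pmul_pcstl (agree_below_pexp k agree_below_F);
  last by lia.
rewrite expF coefXnM; have [lt_j | le_j] := ltnP j (s * k).
  by rewrite mulr0 addr0 gh //; lia.
have j_eq : j = N by lia.
have -> : (j - s * k = 0)%N by lia.
rewrite j_eq coef0_Gn /c divfK ?expf_neq0 //; last by case: f_val.
by rewrite addrCA subrr addr0.
Qed.

Lemma mideal_agree_poly g : mideal R g ->
  exists2 P : {poly K}, P`_0 = 0 & agree_below d g (P \Po F).
Proof.
move=> [Rg g0]; have [P [h [_ hP gh]]] := R_agree_poly (leqnn d) Rg.
have gP : agree_below d g (P \Po F) by move=> j lt_jd; rewrite gh // hP //; lia.
by exists P; rewrite // -coef0_comp_F -gP ?g0 //; lia.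
Qed.

Lemma msq_agree_poly u : msq R u -> exists T : {poly K},
  [/\ T`_0 = 0, T`_1 = 0 & agree_below d.+1 u (T \Po F)].
Proof.
move=> [m [g [h [gh_m u_eq]]]].
suff [T [T0 T1 TF]] : exists T : {poly K}, [/\ T`_0 = 0, T`_1 = 0 &
    agree_below d.+1 (fun j => \sum_(i < m) pmul (g i) (h i) j) (T \Po F)].
  by exists T; split => // j lt_j; rewrite u_eq TF.
clear u_eq; elim: m gh_m => [|m IHm] gh_m.
  by exists 0; split; rewrite ?coef0 // => j _; rewrite big_ord0 comp_poly0 coef0.
have [T [T0 T1 TF]] := IHm (fun i lt_im => gh_m i (leqW lt_im)).
have [mg mh] := gh_m m (ltnSn m).
have [P P0 gP] := mideal_agree_poly mg.
have [Q Q0 hQ] := mideal_agree_poly mh.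
have PF0 : (P \Po F)`_0 = 0 by rewrite coef0_comp_F.
have QF0 : (Q \Po F)`_0 = 0 by rewrite coef0_comp_F.
exists (T + P * Q); split.
- by rewrite coefD coef0M P0 mul0r T0 addr0.
- by rewrite coefD T1 coefM !big_ord_recl big_ord0 /= P0 Q0 mul0r mulr0 !addr0.
move=> j lt_j; rewrite big_ord_recr /= TF // comp_polyD comp_polyM coefD.
by rewrite (agree_below_pmulS (proj2 mg) (proj2 mh) PF0 QF0 gP hQ).
Qed.

(* [T = q X^mu] with [q`_0 != 0], and [F^mu = t^(s mu) G^mu]. *)
Lemma comp_F_factor (T : {poly K}) : T != 0 -> exists mu, exists2 Q : {poly K},
  Q`_0 != 0 & T`_mu != 0 /\ T \Po F = Q * 'X^(s * mu).
Proof.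
move=> T_neq0; have [mu [q q0 T_eq]] := multiplicity_XsubC T 0.
move: q0; rewrite T_neq0 /= rootE horner_coef0 => q0.
rewrite polyC0 subr0 in T_eq.
exists mu; exists ((q \Po F) * G ^+ mu).
  by rewrite coef0M coef0_comp_F coef0_Gn mulf_neq0 // expf_neq0 //; case: f_val.
split; first by rewrite T_eq coefMXn ltnn subnn.
by rewrite T_eq comp_polyM comp_Xn_poly expF [_ * G ^+ mu]mulrC mulrA.
Qed.

Lemma msq_val_decomp : vals (msq R) d ->
  exists y z, [/\ valsg R y, valsg R z, (0 < y)%N, (0 < z)%N & d = (y + z)%N].
Proof.
move=> [u [msq_u [ud u_lt]]].
have [T [T0 T1 uT]] := msq_agree_poly msq_u.
have T_neq0 : T != 0 by apply: contra ud => /eqP T_eq0; rewrite uT // T_eq0 comp_poly0 coef0.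
have [mu [Q Q0 [Tmu TF]]] := comp_F_factor T_neq0.
have mu_ge2 : (2 <= mu)%N by case: mu Tmu {TF} => [|[|mu]] //; rewrite ?T0 ?T1 eqxx.
have d_eq : d = (s * mu)%N.
  have [lt_d | lt_smu | //] := ltngtP d (s * mu).
    by move: ud; rewrite uT // TF coefMXn lt_d eqxx.
  have := u_lt _ lt_smu; rewrite uT ?TF ?coefMXn ?ltnn ?subnn; last by lia.
  by move/eqP; rewrite (negbTE Q0).
have Vs : valsg R s by exists f.
exists s, (s * (mu - 1))%N; split => //.
- exact: valsgMn.
- by rewrite muln_gt0 s_gt0; lia.
- lia.
Qed.

Lemma HKset_second_min_gen : min_gen (valsg R) d -> HKset R d.
Proof.
move=> [Vd d_gt0 indec]; split; first exact: vals_mideal.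
by move/msq_val_decomp.
Qed.

End SecondGenerator.

Section SortedSeq.
Variables (T : eqType) (r : rel T).
Hypothesis r_trans : transitive r.

Lemma sorted_mem_head y x w : sorted r (y :: w) -> x \in y :: w -> x = y \/ r y x.
Proof.
move=> r_yw; rewrite inE => /orP [/eqP | x_w]; first by left.
by right; apply: (allP (order_path_min r_trans r_yw)).
Qed.

Hypothesis r_irr : irreflexive r.

Lemma sorted_subset_nth x0 (a w : seq T) i : sorted r a -> sorted r w -> {subset a <= w} ->
  (forall j, (j <= i)%N -> (j < size w)%N -> nth x0 w j \in a) -> nth x0 a i = nth x0 w i.
Proof.
elim: w a i => [|y w IHw] [|b a] i //= r_a r_w a_w w_a.
- by have := a_w b (mem_head b a).
- by have := w_a 0%N (leq0n i) isT.
have b_eq : b = y.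
  have [// | r_yb] := sorted_mem_head r_w (a_w b (mem_head b a)).
  have y_ba : y \in b :: a := w_a 0%N (leq0n i) isT.
  have [y_b | r_by] := sorted_mem_head r_a y_ba; first by rewrite y_b.
  by have := r_irr y; rewrite (r_trans r_yb r_by).
subst b; case: i w_a => [// | i] w_a /=.
have gt_y x : x \in a -> r y x by apply/allP/(order_path_min r_trans).
apply: IHw; [exact: path_sorted r_a | exact: path_sorted r_w | move=> x x_a |
  move=> j le_ji lt_jw].
- move: (a_w x); rewrite !inE x_a orbT => /(_ isT) /orP [/eqP x_y | //].
  by have := r_irr y; rewrite -{2}x_y gt_y.
- move: (w_a j.+1 le_ji lt_jw); rewrite /= inE => /orP [/eqP w_j_y | //].
  have := r_irr y; rewrite -{2}w_j_y (allP (order_path_min r_trans r_w)) //.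
  exact: mem_nth.
Qed.

End SortedSeq.

Theorem mainTheorem5 (K : fieldType) (R : pser K -> Prop)
  (HR : is_local_ring R) (n : nat) (hn : (2 <= n)%N) (he : edim_is R n)
  (a w : seq nat)
  (ha : sorted ltn a) (haE : forall x, x \in a <-> HKset R x)
  (hw : sorted ltn w) (hwE : forall x, x \in w <-> min_gen (valsg R) x) :
  [/\ nth 0%N a 0 = nth 0%N w 0,
      nth 0%N a 1 = nth 0%N w 1,
      {subset a <= w}
    & is_semigroup_ring R -> a = w].
Proof.
have a_w : {subset a <= w} by move=> x /haE/HKset_min_gen/hwE.
have [x Vx x_gt0] := exists_valsg_gt0 HR.
have [y /hwE y_w _] := min_gen_le Vx x_gt0.
case: w hw hwE a_w y_w => [//|s w] hw hwE a_w _.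
have [Vs s_gt0 _] : min_gen (valsg R) s by apply/hwE; exact: mem_head.
have s_min z : valsg R z -> (0 < z)%N -> (s <= z)%N.
  move=> Vz z_gt0; have [t /hwE t_w le_tz] := min_gen_le Vz z_gt0.
  by have [t_s | lt_st] := sorted_mem_head ltn_trans hw t_w; lia.
have s_a : s \in a by apply/haE; exact: HKset_least.
split => //.
- by apply: (sorted_subset_nth ltn_trans ltnn ha hw a_w) => -[|//] _ _.
- apply: (sorted_subset_nth ltn_trans ltnn ha hw a_w) => -[_ _ //|[_|//]] /=.
  case: w hw hwE a_w => [//|d w] hw hwE _ _.
  have gen_d : min_gen (valsg R) d by apply/hwE; rewrite !inE eqxx orbT.
  have [f [Rf f_val]] := Vs.
  apply/haE/(HKset_second_min_gen HR Rf f_val s_gt0 _ _ gen_d); first by case/andP: hw.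
  apply: dvdn_below_min_gen => z /hwE; rewrite inE => /orP [/eqP -> // | z_dw] lt_zd.
  by have [z_d | lt_dz] := sorted_mem_head ltn_trans (path_sorted hw) z_dw; lia.
- move=> supp_R; apply: (irr_sorted_eq ltn_trans ltnn ha hw) => z.
  by apply/idP/idP => [/a_w // | /hwE/(min_gen_HKset supp_R)/haE].
Qed.
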